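(* Let $G$ be a connected claw-free graph of order $n$. Then $\gamma_{oir2}(G)\geq n/2$. Moreover, $\gamma_{oir2}(G)=n/2$ if and only if $G$ is isomorphic to a graph in the family $\mathcal{G}=\mathcal{G}_1\cup\mathcal{G}_2\cup\mathcal{G}_3$ described in the context.
   Context: All graphs are finite and simple. For a graph $G$, a function $f:V(G)\to\mathcal{P}(\{1,2\})$ is a 2-rainbow dominating function if every vertex $v$ with $f(v)=\emptyset$ satisfies $\bigcup_{u\in N(v)}f(u)=\{1,2\}$. It is an outer-independent 2-rainbow dominating function (OI2RD function) if, in addition, the set $\{v: f(v)=\emptyset\}$ is independent. The weight of $f$ is $\sum_{v\in V(G)}|f(v)|$, and $\gamma_{oir2}(G)$ is the minimum weight of an OI2RD function of $G$. A graph is claw-free if it has no induced subgraph isomorphic to $K_{1,3}$. For $k\geq 1$, a $k$-unit is the graph with vertices $v_1,\dots,v_k,u_1,\dots,u_{k-1}$ whose edges are $v_iv_{i+1}$ and $u_iv_i$, $u_iv_{i+1}$ for $1\le i\le k-1$ (a path $v_1\cdots v_k$ with a triangle on each path edge; it has $k-1$ triangles; a 1-unit is $K_1$). Call $v_1$ and $v_k$ its first and last path vertices. $\mathcal{G}_1$: take integers $r\ge1$ and $k_1,\dots,k_r\ge1$ with $k_1+\dots+k_r$ even, take disjoint units $U_1,\dots,U_r$ where $U_j$ is a $k_j$-unit with path $v^j_1\cdots v^j_{k_j}$, and add new vertices $w_1,\dots,w_r$, where $w_j$ is adjacent exactly to $v^j_{k_j}$ and $v^{j+1}_1$ (indices of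 units taken modulo $r$, so $w_r$ is adjacent to $v^r_{k_r}$ and $v^1_1$). (This includes the cycles $C_n$ with $n\equiv 0 \pmod 4$, when all $k_j=1$.) $\mathcal{G}_2$: take a $k$-unit with $k\ge2$ even (so the number of triangles $k-1$ is odd) and add one new vertex adjacent exactly to $v_1$ and $v_k$. $\mathcal{G}_3$: take a cycle $x_1x_2\cdots x_{2q}x_1$ of even length $2q\ge4$ and, for each cycle edge $x_ix_{i+1}$ (indices mod $2q$), add a new vertex adjacent exactly to $x_i$ and $x_{i+1}$ (so the number of triangles is even). *)

From mathcomp Require Import all_boot.
Set Implicit Arguments. Unset Strict Implicit. Unset Printing Implicit Defensive.

(* A finite simple graph is a symmetric irreflexive relation e on a finType T.
   Connectivity: every two vertices are joined by an e-path (connect e). *)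
Definition connected (T : finType) (e : rel T) : Prop := forall x y, connect e x y.

Definition claw_free (T : finType) (e : rel T) : Prop :=
  ~ exists c a b d : T,
      [/\ e c a, e c b, e c d, [&& a != b, a != d & b != d] &
          [&& ~~ e a b, ~~ e a d & ~~ e b d]].

(* Labels {1,2} are represented by 'I_2. *)
Definition labelling (T : finType) := {ffun T -> {set 'I_2}}.

Definition oi2rd (T : finType) (e : rel T) (f : labelling T) : bool :=
  [forall v, (f v == set0) ==> (\bigcup_(u | e v u) f u == setT)] &&
  [forall u, forall v, ((f u == set0) && (f v == set0)) ==> ~~ e u v].

Definition weight (T : finType) (f : labelling T) : nat := \sum_(v : T) #|f v|.

(* Minimum weight of an OI2RD function.  The constant function {1,2} is always
   an OI2RD function of weight 2|T|, so 2|T| is a harmless initial value. *)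
Definition gamma_oir2 (T : finType) (e : rel T) : nat :=
  \big[minn/(2 * #|T|)]_(f : labelling T | oi2rd e f) weight f.

Definition isomorphic (T1 T2 : finType) (e1 : rel T1) (e2 : rel T2) : Prop :=
  exists f : T1 -> T2, bijective f /\ forall x y, e1 x y = e2 (f x) (f y).

(* Vertices are triples (c, j, a): c = 0 : path vertex v^j_{a+1} (a < k_j),
   c = 1 : triangle vertex u^j_{a+1} (a+1 < k_j), c = 2 : w_j (a = 0).
   Unit indices j range over 'I_r (0-based), so unit j+1 is (j+1) mod r. *)
Definition G1M (r : nat) (k : nat -> nat) : nat := \max_(j < r) k j.

Definition G1valid (r : nat) (k : nat -> nat)
    (x : 'I_3 * 'I_r * 'I_(G1M r k)) : bool :=
  let: (c, j, a) := x in
  if val c == 0 then a < k j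
  else if val c == 1 then a.+1 < k j
  else val a == 0.

Definition G1V (r : nat) (k : nat -> nat) : finType :=
  {x : 'I_3 * 'I_r * 'I_(G1M r k) | @G1valid r k x}.

Definition G1adj0 (r : nat) (k : nat -> nat) (c j a c' j' b : nat) : bool :=
  [|| [&& c == 0, c' == 0, j == j' & (a.+1 == b) || (b.+1 == a)],
      [&& c == 1, c' == 0, j == j' & (b == a) || (b == a.+1)]
    | [&& c == 2, c' == 0 &
          ((j' == j) && (b == (k j).-1)) || ((j' == j.+1 %% r) && (b == 0))]].

Definition G1rel (r : nat) (k : nat -> nat) : rel (G1V r k) :=
  fun x y =>
    let: (c, j, a) := val x in
    let: (c', j', b) := val y in
    G1adj0 r k c j a c' j' b || G1adj0 r k c' j' b c j a.

Definition in_G1 (T : finType) (e : rel T) : Prop :=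
  exists (r : nat) (k : nat -> nat),
    [/\ 0 < r, (forall j, j < r -> 0 < k j), ~~ odd (\sum_(j < r) k j) &
        isomorphic e (@G1rel r k)].

(* (c, a): c = 0 : v_{a+1} (a < k), c = 1 : u_{a+1} (a+1 < k), c = 2 : the new vertex. *)
Definition G2valid (k : nat) (x : 'I_3 * 'I_k) : bool :=
  let: (c, a) := x in
  if val c == 0 then true
  else if val c == 1 then a.+1 < k
  else val a == 0.

Definition G2V (k : nat) : finType := {x : 'I_3 * 'I_k | G2valid x}.

Definition G2adj0 (k : nat) (c a c' b : nat) : bool :=
  [|| [&& c == 0, c' == 0 & (a.+1 == b) || (b.+1 == a)],
      [&& c == 1, c' == 0 & (b == a) || (b == a.+1)]
    | [&& c == 2, c' == 0 & (b == 0) || (b == k.-1)]].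

Definition G2rel (k : nat) : rel (G2V k) :=
  fun x y =>
    let: (c, a) := val x in
    let: (c', b) := val y in
    G2adj0 k c a c' b || G2adj0 k c' b c a.

Definition in_G2 (T : finType) (e : rel T) : Prop :=
  exists k : nat, [/\ 2 <= k, ~~ odd k & isomorphic e (@G2rel k)].

(* (0, i) : cycle vertex x_{i+1};  (1, i) : vertex adjacent to x_{i+1}, x_{i+2}
   (indices mod 2q). *)
Definition G3V (q : nat) : finType := ('I_2 * 'I_(2 * q))%type.

Definition G3adj0 (q : nat) (c i c' i' : nat) : bool :=
  [|| [&& c == 0, c' == 0 & i' == i.+1 %% (2 * q)]
    | [&& c == 1, c' == 0 & (i' == i) || (i' == i.+1 %% (2 * q))]].

Definition G3rel (q : nat) : rel (G3V q) :=
  fun x y => G3adj0 q x.1 x.2 y.1 y.2 || G3adj0 q y.1 y.2 x.1 x.2.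

Definition in_G3 (T : finType) (e : rel T) : Prop :=
  exists q : nat, 2 <= q /\ isomorphic e (@G3rel q).

Definition in_family (T : finType) (e : rel T) : Prop :=
  [\/ in_G1 e, in_G2 e | in_G3 e].

From mathcomp Require Import all_boot zify.
Set Implicit Arguments. Unset Strict Implicit. Unset Printing Implicit Defensive.

(* Let S be the set of vertices labelled by the empty set.  Each s in S sees
   both labels among its neighbours, and by claw-freeness a labelled vertex
   has at most two neighbours in the independent set S; double counting gives
   2|S| <= 2 w(f), and |V - S| <= w(f) holds trivially, so n <= 2 w(f).  In
   case of equality all labels are singletons, every s in S has degree 2 and
   every labelled vertex has exactly two neighbours in S.  The S - (V - S)
   edges then form a 2-regular bipartite graph, which connectivity makes a
   single cycle; claw-freeness allows labelled vertices to be adjacent only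
   to their successors along it.  The singleton labels alternate, so the cycle
   has even length, and the graph lies in G1 when some edge between
   consecutive labelled vertices is missing and in G3 otherwise.  Conversely,
   every graph of the family has this shape, and labelling its cycle vertices
   alternately {1}, {2} has weight n/2. *)

Section Isomorphism.
Variables (T1 T2 T3 : finType) (e1 : rel T1) (e2 : rel T2) (e3 : rel T3).

Lemma isomorphic_sym : isomorphic e1 e2 -> isomorphic e2 e1.
Proof.
case=> f [[g fK gK] ef]; exists g; split; first by exists f.
by move=> x y; rewrite ef !gK.
Qed.

Lemma isomorphic_trans : isomorphic e1 e2 -> isomorphic e2 e3 -> isomorphic e1 e3.
Proof.
case=> f [bf ef] [g [bg eg]]; exists (g \o f); split; first exact: bij_comp.
by move=> x y; rewrite ef eg.
Qed.

Lemma inj_surj_bij (f : T1 -> T2) :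
  injective f -> (forall y, exists x, f x = y) -> bijective f.
Proof.
move=> f_inj f_surj; apply: inj_card_bij => //.
rewrite -(card_codom f_inj); apply: subset_leq_card; apply/subsetP => y _.
by have [x <-] := f_surj y; apply: codom_f.
Qed.

End Isomorphism.

Lemma eqrel_isomorphic (T : finType) (e e' : rel T) : e =2 e' -> isomorphic e e'.
Proof. by move=> ee'; exists id; split => //; exists id. Qed.

Lemma leq_card_bigcup (T I : finType) (P : pred I) (F : I -> {set T}) :
  #|\bigcup_(i | P i) F i| <= \sum_(i | P i) #|F i|.
Proof.
apply: (big_ind2 (fun (A : {set T}) n => #|A| <= n)) => [|A a B b leA leB|//].
  by rewrite cards0.
exact: leq_trans (leq_card_setU A B) (leq_add leA leB).
Qed.

Lemma leq_sum_eq (I : finType) (P : pred I) (F G : I -> nat) :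
  (forall i, P i -> F i <= G i) -> \sum_(i | P i) G i <= \sum_(i | P i) F i ->
  forall i, P i -> F i = G i.
Proof.
move=> leFG geFG i Pi; have [_] := leqif_sum (fun i Pi => leqif_eq (leFG i Pi)).
move/esym; rewrite eqn_leq geFG leq_sum // => /forall_inP /(_ i Pi) /eqP //.
Qed.

Section Gamma.
Variables (T : finType) (e : rel T).

Lemma gamma_oir2_le (f : labelling T) : oi2rd e f -> gamma_oir2 e <= weight f.
Proof.
rewrite /gamma_oir2 unlock /reducebig => ef.
elim: (index_enum _) (mem_index_enum f) => [//|g s IHs]; rewrite inE /=.
case/orP=> [/eqP<-|/IHs le_s]; first by rewrite ef geq_minl.
by case: (oi2rd e g) => //; exact: leq_trans (geq_minr _ _) le_s.
Qed.

Lemma gamma_oir2_attained : exists2 f, oi2rd e f & weight f = gamma_oir2 e.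
Proof.
pose full : labelling T := [ffun=> setT].
have full_oi2rd : oi2rd e full.
  have full_ne0 v : (full v == set0) = false by rewrite ffunE -cards_eq0 cardsT card_ord.
  by apply/andP; split; apply/forallP => u; rewrite full_ne0 //; apply/forallP.
have full_weight : weight full = 2 * #|T|.
  rewrite /weight (eq_bigr (fun _ => 2)) => [|v _]; last by rewrite ffunE cardsT card_ord.
  by rewrite sum_nat_const mulnC.
rewrite /gamma_oir2; elim/big_ind: _ => [|x y [f ef <-] [g eg <-]|f ef].
- by exists full.
- by case: leqP => _; [exists f | exists g].
- by exists f.
Qed.

End Gamma.

Lemma isomorphic_gamma_oir2_le (T1 T2 : finType) (e1 : rel T1) (e2 : rel T2)
    (f2 : labelling T2) :
  isomorphic e1 e2 -> oi2rd e2 f2 -> gamma_oir2 e1 <= weight f2.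
Proof.
case=> phi [bphi ephi] /andP[/forallP dom2 /forallP ind2].
pose f1 : labelling T1 := [ffun x => f2 (phi x)].
have -> : weight f2 = weight f1.
  by rewrite /weight (reindex phi) /=; [apply: eq_bigr => x _; rewrite ffunE | exact: onW_bij].
apply: gamma_oir2_le; apply/andP; split.
- apply/forallP => v; rewrite ffunE; apply/implyP => /(implyP (dom2 (phi v))).
  rewrite (reindex phi) /=; last exact: onW_bij.
  by rewrite (eq_big (fun u => e1 v u) (fun u => f1 u)) // => u; rewrite ?ephi ?ffunE.
- apply/forallP => u; apply/forallP => v; rewrite !ffunE ephi.
  exact: (forallP (ind2 (phi u)) (phi v)).
Qed.

Definition blank (T : finType) (f : labelling T) (v : T) : bool := f v == set0.

Definition blank_nbrs (T : finType) (e : rel T) (f : labelling T) (u : T) : {set T} :=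
  [set t | e u t & blank f t].

Section LowerBound.
Variables (T : finType) (e : rel T) (f : labelling T).
Hypotheses (e_sym : symmetric e) (e_cf : claw_free e) (f_oi2rd : oi2rd e f).

Lemma blank_indep u v : blank f u -> blank f v -> ~~ e u v.
Proof.
case/andP: f_oi2rd => _ /forallP indep fu fv.
by have := forallP (indep u) v; rewrite /blank in fu fv; rewrite fu fv.
Qed.

Lemma blank_cover s : blank f s -> \bigcup_(u | e s u) f u = setT.
Proof. by case/andP: f_oi2rd => /forallP dom _ fs; apply/eqP; exact: (implyP (dom s)). Qed.

Lemma card_blank_nbrs_le2 u : ~~ blank f u -> #|blank_nbrs e f u| <= 2.
Proof.
move=> fu; rewrite leqNgt; apply/negP => /card_gt2P[a [b [d [[ua ub ud] [ab bd da]]]]].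
move: ua ub ud; rewrite !inE => /andP[ua fa] /andP[ub fb] /andP[ud fd].
apply: e_cf; exists u, a, b, d; split => //; first by rewrite ab eq_sym da bd.
by rewrite !blank_indep.
Qed.

Let nbr_weight s := \sum_(u | e s u) #|f u|.

Lemma nbr_weight_ge2 s : blank f s -> 2 <= nbr_weight s.
Proof.
move=> fs; apply: leq_trans (leq_card_bigcup _ _).
by rewrite blank_cover // cardsT card_ord.
Qed.

Lemma sum_nbr_weight :
  \sum_(s | blank f s) nbr_weight s = \sum_u #|f u| * #|blank_nbrs e f u|.
Proof.
rewrite /nbr_weight; under eq_bigr do rewrite big_mkcond /=.
rewrite exchange_big /=; apply: eq_bigr => u _.
rewrite -sum1_card big_distrr /= [RHS]big_mkcond /= big_mkcond /=.
by apply: eq_bigr => s _; rewrite inE e_sym; case: (blank f s); case: (e u s); rewrite ?muln1.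
Qed.

Lemma weighted_blank_nbrs_le u : #|f u| * #|blank_nbrs e f u| <= #|f u| * 2.
Proof.
have [/eqP->|fu] := boolP (blank f u); first by rewrite cards0.
by rewrite leq_mul2l card_blank_nbrs_le2 ?orbT.
Qed.

Lemma sum_weight_twice : \sum_u #|f u| * 2 = 2 * weight f.
Proof. by rewrite /weight mulnC big_distrl. Qed.

Lemma weight_labelled : weight f = \sum_(v | ~~ blank f v) #|f v|.
Proof. by rewrite /weight (bigID (blank f)) /= big1 // => v /eqP->; rewrite cards0. Qed.

Lemma sum_blank_const c : \sum_(s | blank f s) c = c * #|[set s | blank f s]|.
Proof. by rewrite sum_nat_const mulnC; congr (_ * _); apply: eq_card => v; rewrite inE. Qed.

Lemma card_labelled : #|~: [set s | blank f s]| = \sum_(v | ~~ blank f v) 1.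
Proof. by rewrite -sum1_card; apply: eq_bigl => v; rewrite !inE. Qed.

Lemma card_blank_le_weight : #|[set s | blank f s]| <= weight f.
Proof.
rewrite -(leq_pmul2l (isT : 0 < 2)) -sum_blank_const -sum_weight_twice.
apply: leq_trans (leq_sum _ nbr_weight_ge2) _.
rewrite sum_nbr_weight.
exact: leq_sum _ (fun u _ => weighted_blank_nbrs_le u).
Qed.

Lemma card_labelled_le_weight : #|~: [set s | blank f s]| <= weight f.
Proof. by rewrite card_labelled weight_labelled; apply: leq_sum => v; rewrite card_gt0. Qed.

Lemma weight_lower_bound : #|T| <= 2 * weight f.
Proof.
by rewrite -(cardsC [set s | blank f s]) mul2n -addnn leq_add ?card_blank_le_weight
  ?card_labelled_le_weight.
Qed.

Lemma extremal_labelling : 2 * weight f = #|T| ->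
  [/\ forall v, ~~ blank f v -> #|f v| = 1,
      forall s, blank f s -> #|[set u | e s u]| = 2 &
      forall u, ~~ blank f u -> #|blank_nbrs e f u| = 2].
Proof.
rewrite -(cardsC [set s | blank f s]) => tight.
have blank_eq : #|[set s | blank f s]| = weight f.
  by have := card_blank_le_weight; have := card_labelled_le_weight; lia.
have labelled_eq : #|~: [set s | blank f s]| = weight f.
  by have := card_blank_le_weight; have := card_labelled_le_weight; lia.
have sum_eq : \sum_(s | blank f s) nbr_weight s = 2 * weight f.
  apply/eqP; rewrite eqn_leq; apply/andP; split.
    rewrite sum_nbr_weight -sum_weight_twice.
    exact: leq_sum _ (fun u _ => weighted_blank_nbrs_le u).
  by rewrite -blank_eq -sum_blank_const; exact: leq_sum _ nbr_weight_ge2.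
have singleton v : ~~ blank f v -> #|f v| = 1.
  move=> fv; apply/esym.
  apply: (leq_sum_eq (P := fun v => ~~ blank f v) (F := fun=> 1)
                     (G := fun v => #|f v|)) fv => [u|].
    by rewrite card_gt0.
  by rewrite -card_labelled -weight_labelled labelled_eq.
split => // [s fs|u fu].
- move: (leq_sum_eq (P := blank f) (F := fun=> 2) (G := nbr_weight) nbr_weight_ge2).
  rewrite sum_blank_const blank_eq sum_eq => /(_ (leqnn _) s fs) ->.
  rewrite /nbr_weight -sum1_card; apply: eq_big => [u|u]; rewrite inE // => su.
  by rewrite singleton //; apply: contraL su; apply: blank_indep.
- have := @leq_sum_eq _ predT _ _ (fun u _ => weighted_blank_nbrs_le u) _ u isT.
  by rewrite sum_weight_twice -sum_eq sum_nbr_weight singleton // !mul1n => ->.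
Qed.

End LowerBound.

(* [tricycle m h] is the cycle x_0 ... x_(m-1) (layer 0), where the cycle edge
   x_i x_(i+1) is kept iff [h i], together with an apex (layer 1) adjacent to
   x_i and x_(i+1) for every i.  Every graph of the family is of this shape. *)
Definition tricycle_adj (m : nat) (h : nat -> bool) (c i c' i' : nat) : bool :=
  [|| [&& c == 0, c' == 0 & (i' == i.+1 %% m) && h i]
    | [&& c == 1, c' == 0 & (i' == i) || (i' == i.+1 %% m)]].

Definition tricycle (m : nat) (h : nat -> bool) : rel ('I_2 * 'I_m) :=
  fun x y => tricycle_adj m h x.1 x.2 y.1 y.2 || tricycle_adj m h y.1 y.2 x.1 x.2.
Arguments tricycle : clear implicits.

Lemma eq_tricycle m h h' :
  (forall i, i < m -> h i = h' i) -> tricycle m h =2 tricycle m h'.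
Proof. by move=> hh' [b i] [b' i']; rewrite /tricycle /tricycle_adj /= !hh'. Qed.

Lemma G3_tricycle q : @G3rel q =2 tricycle (2 * q) (fun _ => true).
Proof. by move=> [c i] [c' i']; rewrite /G3rel /tricycle /G3adj0 /tricycle_adj /= !andbT. Qed.

Definition offset (k : nat -> nat) (j : nat) : nat := \sum_(t < j) k t.

(* Cutting the cycle into consecutive units of sizes k 0, ..., k (r-1),
   [within_unit r k i] says that x_i and x_(i+1) lie in the same unit. *)
Definition within_unit (r : nat) (k : nat -> nat) (i : nat) : bool :=
  ~~ has (fun j => i.+1 == offset k j.+1) (iota 0 r).

Lemma offset0 k : offset k 0 = 0.
Proof. by rewrite /offset big_ord0. Qed.

Lemma offsetS k j : offset k j.+1 = offset k j + k j.
Proof. by rewrite /offset big_ord_recr. Qed.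

Lemma leq_offset k j j' : j <= j' -> offset k j <= offset k j'.
Proof.
move=> le_jj'; rewrite -(subnKC le_jj'); elim: (j' - j) => [|d IHd]; first by rewrite addn0.
by rewrite addnS offsetS; apply: leq_trans IHd (leq_addr _ _).
Qed.

Lemma offset_cover k n i :
  i < offset k n -> exists j, [/\ j < n, offset k j <= i & i < offset k j + k j].
Proof.
elim: n => [|n IHn]; first by rewrite offset0.
case: (ltnP i (offset k n)) => [/IHn [j [jn lei lti]] _|lei lti].
  by exists j; split => //; rewrite ltnS ltnW.
by exists n; split => //; rewrite -offsetS.
Qed.

Section Snoc.
Variables (r : nat) (k : nat -> nat) (len : nat).
Let k' j := if j < r then k j else len.

Lemma offset_snoc j : j <= r -> offset k' j = offset k j.
Proof.
by move=> le_jr; apply: eq_bigr => t _; rewrite /k' (leq_trans (ltn_ord t) le_jr).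
Qed.

Lemma offset_snoc_last : offset k' r.+1 = offset k r + len.
Proof. by rewrite offsetS offset_snoc // /k' ltnn. Qed.

Lemma within_unit_snoc i : 0 < len ->
  within_unit r.+1 k' i =
  if i < offset k r then within_unit r k i else i.+1 != offset k r + len.
Proof.
move=> len_gt0; rewrite /within_unit -[r.+1]addn1 iotaD has_cat /= orbF -offset_snoc_last.
rewrite (@eq_in_has _ _ (fun j => i.+1 == offset k j.+1)); last first.
  by move=> j; rewrite mem_iota => /andP[_ jr]; rewrite offset_snoc.
rewrite negb_or; case: ltnP => [lt_i|ge_i].
  by rewrite offset_snoc_last (_ : (i.+1 == _) = false) ?andbT //; apply/negbTE; lia.
rewrite (_ : has _ _ = false) //; apply/negbTE/hasPn => j.
rewrite mem_iota add0n => /andP[_ jr]; have := leq_offset k jr; lia.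
Qed.

End Snoc.

(* The last unit starts right after the last missing cycle edge before x_(m-1);
   the positions before it are decomposed by induction. *)
Lemma tricycle_unit_decomposition m (h : nat -> bool) : 0 < m -> ~~ h m.-1 ->
  exists r k, [/\ 0 < r, (forall j, j < r -> 0 < k j), offset k r = m &
                  forall i, i < m -> h i = within_unit r k i].
Proof.
elim/ltn_ind: m => m IHm m_gt0 hm.
have [r [k [k_gt0 lt_km prefix suffix]]] : exists r k,
    [/\ forall j, j < r -> 0 < k j, offset k r < m,
        forall i, i < offset k r -> h i = within_unit r k i &
        forall i, offset k r <= i < m.-1 -> h i].
  case: (boolP [exists i : 'I_m.-1, ~~ h i]) => [/existsP ex_i | /existsPn all_h].
    have ex_i' : exists i, (i < m.-1) && ~~ h i.
      by have [i hi] := ex_i; exists i; rewrite ltn_ord hi.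
    have ub_i : forall i, (i < m.-1) && ~~ h i -> i <= m by move=> i /andP[? _]; lia.
    have [i0 /andP[i0m hi0] max_i0] := ex_maxnP ex_i' ub_i.
    have [|||r [k [_ k_gt0 off_k hk]]] := IHm i0.+1 => //; first by lia.
    exists r, k; rewrite off_k; split => //; first by lia.
    move=> i /andP[le_i lt_i]; apply/negPn/negP => hi.
    by have := max_i0 i; rewrite lt_i hi /= => /(_ isT); lia.
  exists 0, (fun=> 0); split => //; rewrite offset0 // => i /andP[_ lt_i].
  by have := all_h (Ordinal lt_i); rewrite negbK.
exists r.+1, (fun j => if j < r then k j else m - offset k r); split => //.
- by move=> j jr; case: ifP => [/k_gt0 //|_]; lia.
- by rewrite offset_snoc_last; lia.
move=> i lt_im; rewrite within_unit_snoc; last by lia.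
case: ltnP => [/prefix //|ge_i]; rewrite subnKC 1?ltnW //.
have [lt_i|ge_i'] := ltnP i m.-1; first by rewrite suffix ?ge_i //; apply/esym/eqP; lia.
have -> : i = m.-1 by lia.
by rewrite (negbTE hm) prednK ?eqxx.
Qed.

Section G1Tricycle.
Variables (r : nat) (k : nat -> nat).
Hypotheses (r_gt0 : 0 < r) (k_gt0 : forall j, j < r -> 0 < k j).

Local Notation m := (offset k r).

Lemma offset_inj j j' a b : j < r -> j' < r -> a < k j -> b < k j' ->
  offset k j + a = offset k j' + b -> j = j' /\ a = b.
Proof.
wlog le_jj' : j j' a b / j <= j' => [wlog_le jr j'r ak bk eq_ab|jr j'r ak bk].
  case: (leqP j j') => [le|/ltnW le]; first exact: wlog_le.
  by have [-> ->] := wlog_le j' j b a le j'r jr bk ak (esym eq_ab).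
case: (ltnP j j') => [lt_jj'|ge_jj']; first by have := leq_offset k lt_jj'; rewrite offsetS; lia.
have eq_jj' : j = j' by lia.
by subst j'; lia.
Qed.

Lemma offset_eq j j' a b : j < r -> j' < r -> a < k j -> b < k j' ->
  (offset k j' + b == offset k j + a) = (j' == j) && (b == a).
Proof.
move=> jr j'r ak bk; apply/eqP/andP => [/esym eq_ab | [/eqP -> /eqP ->] //].
by have [-> ->] := offset_inj jr j'r ak bk eq_ab.
Qed.

Lemma offset_lt j a : j < r -> a < k j -> offset k j + a < m.
Proof. by move=> jr ak; have := leq_offset k jr; rewrite offsetS; lia. Qed.

Lemma offset_gt0 : 0 < m.
Proof. by have := offset_lt r_gt0 (k_gt0 r_gt0); rewrite offset0. Qed.

Lemma within_unitE j a : j < r -> a < k j -> within_unit r k (offset k j + a) = (a.+1 < k j).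
Proof.
move=> jr ak; apply/idP/idP.
  apply: contraLR; rewrite -leqNgt => ge_ak; apply/negPn/hasP.
  by exists j; rewrite ?mem_iota // offsetS; apply/eqP; lia.
move=> lt_ak; apply/hasPn => j'; rewrite mem_iota => /andP[_ j'r].
rewrite offsetS; apply/eqP => eq_end; have k'_gt0 := k_gt0 j'r.
have lt_last : (k j').-1 < k j' by rewrite ltn_predL.
have eq_pos : offset k j + a = offset k j' + (k j').-1 by lia.
by have [eq_j eq_a] := offset_inj jr j'r ak lt_last eq_pos; subst j'; lia.
Qed.

Lemma G1_path_adj j j' a b : j < r -> j' < r -> a < k j -> b < k j' ->
  (j == j') && (a.+1 == b) =
  (offset k j' + b == (offset k j + a).+1 %% m) && within_unit r k (offset k j + a).
Proof.
move=> jr j'r ak bk; rewrite within_unitE //; case: (ltnP a.+1 (k j)) => [lt_ak|ge_ak].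
  rewrite andbT -addnS modn_small ?offset_lt //.
  by rewrite offset_eq // eq_sym [b == _]eq_sym.
by rewrite andbF; apply/negP => /andP[/eqP eq_j /eqP eq_b]; subst j' b; lia.
Qed.

Lemma G1_apex_adj j j' a b : j < r -> j' < r -> a.+1 < k j -> b < k j' ->
  (j == j') && ((b == a) || (b == a.+1)) =
  (offset k j' + b == offset k j + a) || (offset k j' + b == (offset k j + a).+1 %% m).
Proof.
move=> jr j'r ak bk; rewrite -addnS modn_small ?offset_lt //.
by rewrite !offset_eq // ?(ltnW ak) // eq_sym andb_orr.
Qed.

Lemma G1_link_adj j j' b : j < r -> j' < r -> b < k j' ->
  ((j' == j) && (b == (k j).-1)) || ((j' == j.+1 %% r) && (b == 0)) =
  (offset k j' + b == offset k j + (k j).-1) ||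
  (offset k j' + b == (offset k j + (k j).-1).+1 %% m).
Proof.
move=> jr j'r bk; have kj_gt0 := k_gt0 jr.
rewrite offset_eq ?ltn_predL //; congr (_ || _).
have -> : (offset k j + (k j).-1).+1 = offset k j.+1 + 0 by rewrite offsetS; lia.
case: (ltnP j.+1 r) => [lt_jr|ge_jr].
  by rewrite (modn_small lt_jr) modn_small ?offset_lt ?k_gt0 // offset_eq ?k_gt0.
have last_j : j.+1 = r by lia.
have start : offset k j' + b == 0 = (offset k j' + b == offset k 0 + 0) by rewrite offset0.
by rewrite last_j addn0 !modnn start offset_eq ?k_gt0.
Qed.

(* A vertex (c, j, a) of G1 is sent to the tricycle position of v^j_(a+1) for
   c = 0, of u^j_(a+1) for c = 1, and w_j is the apex between the last vertex
   of unit j and the first vertex of unit j+1. *)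
Definition g1_pos (c j a : nat) : nat :=
  if c == 2 then offset k j + (k j).-1 else offset k j + a.

Definition g1_layer (c : nat) : 'I_2 := if c == 0 then ord0 else ord_max.

Definition g1_to_tricycle (x : G1V r k) : 'I_2 * 'I_m :=
  let: (c, j, a) := val x in (g1_layer c, insubd (Ordinal offset_gt0) (g1_pos c j a)).

Lemma g1_pos_lt (c : 'I_3) (j : 'I_r) (a : 'I_(G1M r k)) :
  G1valid (c, j, a) -> g1_pos c j a < m.
Proof.
rewrite /G1valid /g1_pos; have kj_gt0 := k_gt0 (ltn_ord j).
case: c => [[|[|[|c]]] c3] //= valid_x; apply: offset_lt => //; first exact: ltnW.
by rewrite ltn_predL.
Qed.

Lemma g1_to_tricycleE (c : 'I_3) (j : 'I_r) (a : 'I_(G1M r k)) (vx : G1valid (c, j, a)) :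
  g1_to_tricycle (exist _ (c, j, a) vx) = (g1_layer c, insubd (Ordinal offset_gt0) (g1_pos c j a))
  /\ val (insubd (Ordinal offset_gt0) (g1_pos c j a) : 'I_m) = g1_pos c j a.
Proof. by split => //; rewrite val_insubd g1_pos_lt. Qed.

Lemma g1_to_tricycle_rel (x y : G1V r k) :
  @G1rel r k x y = tricycle m (within_unit r k) (g1_to_tricycle x) (g1_to_tricycle y).
Proof.
case: x => [[[c j] a] vx]; case: y => [[[c' j'] b] vy].
have [-> posx] := g1_to_tricycleE vx; have [-> posy] := g1_to_tricycleE vy.
rewrite /G1rel /tricycle /= posx posy {posx posy}.
move: vx vy; rewrite /G1valid /g1_pos /g1_layer.
have jr := ltn_ord j; have j'r := ltn_ord j'.
case: c => [[|[|[|c]]] c3] //=; case: c' => [[|[|[|c']]] c'3] //= vx vy;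
  rewrite /G1adj0 /tricycle_adj /= ?orbF ?andbF ?orbF //.
- rewrite -(G1_path_adj jr j'r vx vy) -(G1_path_adj j'r jr vy vx) [j' == j :> nat]eq_sym.
  by case: (_ == _); case: (a.+1 == b); case: (b.+1 == a).
- by rewrite (G1_apex_adj j'r jr vy vx).
- by rewrite (G1_link_adj j'r jr vx).
- by rewrite (G1_apex_adj jr j'r vx vy).
- by rewrite (G1_link_adj jr j'r vy).
Qed.

Lemma g1_to_tricycle_inj : injective g1_to_tricycle.
Proof.
case=> [[[c j] a] vx] [[[c' j'] b] vy].
have [-> posx] := g1_to_tricycleE vx; have [-> posy] := g1_to_tricycleE vy.
case=> eq_layer /(congr1 val); rewrite posx posy {posx posy} => eq_pos.
apply: val_inj => /=; have jr := ltn_ord j; have j'r := ltn_ord j'.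
have last_lt i : i < r -> (k i).-1 < k i by move=> ir; rewrite ltn_predL k_gt0.
move: vx vy eq_layer eq_pos; rewrite /G1valid /g1_pos /g1_layer.
case: c => [[|[|[|c]]] c3] //=; case: c' => [[|[|[|c']]] c'3] //= vx vy;
  move=> /(congr1 val) //= _ eq_pos.
- have [/val_inj eq_j /val_inj eq_a] := offset_inj jr j'r vx vy eq_pos; subst.
  by rewrite (bool_irrelevance c3 c'3).
- have [/val_inj eq_j /val_inj eq_a] := offset_inj jr j'r (ltnW vx) (ltnW vy) eq_pos.
  by subst; rewrite (bool_irrelevance c3 c'3).
- have [eq_j eq_a] := offset_inj jr j'r (ltnW vx) (last_lt _ j'r) eq_pos.
  by move: vx; rewrite eq_a eq_j; lia.
- have [eq_j eq_a] := offset_inj j'r jr (ltnW vy) (last_lt _ jr) (esym eq_pos).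
  by move: vy; rewrite eq_a eq_j; lia.
- have [/val_inj eq_j _] := offset_inj jr j'r (last_lt _ jr) (last_lt _ j'r) eq_pos; subst.
  have eq_a : a = b by apply/val_inj; rewrite /= (eqP vx) (eqP vy).
  by subst; rewrite (bool_irrelevance c3 c'3).
Qed.

Lemma g1_to_tricycle_surj y : exists x, g1_to_tricycle x = y.
Proof.
case: y => b i.
have [j [jr le_ji lt_ij]] := offset_cover (ltn_ord i).
have le_kM : k j <= G1M r k by exact: (leq_bigmax (F := fun j : 'I_r => k j) (Ordinal jr)).
have aM : i - offset k j < G1M r k by lia.
have hit (c : 'I_3) (a : 'I_(G1M r k)) (vx : G1valid (c, Ordinal jr, a)) b' :
    g1_layer c = b' -> g1_pos c j a = i -> exists x, g1_to_tricycle x = (b', i).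
  move=> eq_b eq_i; exists (exist (@G1valid r k) _ vx).
  by have [-> _] := g1_to_tricycleE vx; rewrite eq_b eq_i valKd.
case: b => [[|[|b]] b2] //.
- apply: (hit (Ordinal (isT : 0 < 3)) (Ordinal aM)); rewrite /G1valid /g1_pos //=; first by lia.
  + exact: val_inj.
  + by lia.
- case: (ltnP (i - offset k j).+1 (k j)) => [lt_a|ge_a].
  + apply: (hit (Ordinal (isT : 1 < 3)) (Ordinal aM)); rewrite /g1_pos //=.
      exact: val_inj.
    by lia.
  + have M_gt0 : 0 < G1M r k by apply: leq_trans le_kM; exact: k_gt0.
    apply: (hit (Ordinal (isT : 2 < 3)) (Ordinal M_gt0)); rewrite /g1_pos //=.
      exact: val_inj.
    by lia.
Qed.

Lemma G1_tricycle : isomorphic (@G1rel r k) (tricycle m (within_unit r k)).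
Proof.
exists g1_to_tricycle; split; last exact: g1_to_tricycle_rel.
exact: inj_surj_bij g1_to_tricycle_inj g1_to_tricycle_surj.
Qed.

End G1Tricycle.

Section G2Unit.
Variables (k : nat) (k_gt0 : 0 < k).
Local Notation unit_size := (fun _ : nat => k).

Lemma G1M_single : k = G1M 1 unit_size.
Proof. by rewrite /G1M big_ord1. Qed.

Definition g2_to_g1 (x : G2V k) : G1V 1 unit_size :=
  let: (c, a) := val x in
  insubd (exist (@G1valid 1 unit_size) (ord0, ord0, cast_ord G1M_single (Ordinal k_gt0)) k_gt0)
         (c, ord0, cast_ord G1M_single a).

Lemma g2_to_g1E (c : 'I_3) (a : 'I_k) (vx : G2valid (c, a)) :
  val (g2_to_g1 (exist _ (c, a) vx)) = (c, ord0, cast_ord G1M_single a).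
Proof.
rewrite /g2_to_g1 /= val_insubd; case: ifP => // /negP []; move: vx.
by rewrite /G1valid /G2valid /=; case: ifP => // _; case: ifP.
Qed.

Lemma g2_to_g1_inj : injective g2_to_g1.
Proof.
case=> [[c a] vx] [[c' b] vy] /(congr1 val); rewrite !g2_to_g1E => [[eq_c eq_a]].
have {}eq_a : a = b by apply: val_inj.
move: vx vy; rewrite eq_c eq_a => vx vy; congr exist; exact: bool_irrelevance.
Qed.

Lemma g2_to_g1_surj y : exists x, g2_to_g1 x = y.
Proof.
case: y => [[[c j] a] vy].
have vx : G2valid (c, cast_ord (esym G1M_single) a).
  by move: vy; rewrite /G1valid /G2valid /=; case: ifP => // _; case: ifP.
exists (exist (@G2valid k) _ vx); apply: val_inj; rewrite g2_to_g1E /= cast_ordKV.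
by have -> : j = ord0 by apply/val_inj; case: j {vy} => [[|j] ?].
Qed.

Lemma g2_to_g1_rel x y : @G2rel k x y = @G1rel 1 unit_size (g2_to_g1 x) (g2_to_g1 y).
Proof.
case: x => [[c a] vx]; case: y => [[c' b] vy].
rewrite /G1rel !g2_to_g1E /G2rel /= /G2adj0 /G1adj0 /=.
by rewrite (orbC (b == 0 :> nat)) (orbC (a == 0 :> nat)).
Qed.

Lemma G2_G1 : isomorphic (@G2rel k) (@G1rel 1 unit_size).
Proof.
exists g2_to_g1; split; last exact: g2_to_g1_rel.
exact: inj_surj_bij g2_to_g1_inj g2_to_g1_surj.
Qed.

End G2Unit.

Lemma setT_I2 (a b : 'I_2) : a != b -> [set a; b] = setT.
Proof.
move=> ab; apply/setP => x; rewrite !inE.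
by case: a b x ab => [[|[|?]] ?] [[|[|?]] ?] [[|[|?]] ?]; rewrite // -!val_eqE.
Qed.

Lemma set1_neq0 (T : finType) (x : T) : ([set x] == set0) = false.
Proof. by apply/negbTE/set0Pn; exists x; rewrite inE. Qed.

Section AlternatingLabelling.
Variables (m : nat) (h : nat -> bool).
Hypotheses (m_gt0 : 0 < m) (m_even : ~~ odd m).

Definition parity (i : nat) : 'I_2 := inord (odd i).

Definition alternating : labelling ('I_2 * 'I_m)%type :=
  [ffun x : 'I_2 * 'I_m => if x.1 == ord0 then [set parity x.2] else set0].

Lemma odd_succ_mod (i : 'I_m) : odd (i.+1 %% m) = ~~ odd i.
Proof.
case: (ltnP i.+1 m) => [lt_im|ge_im]; first by rewrite modn_small.
have last_i : i.+1 = m by have := ltn_ord i; lia.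
have odd_i : odd i by move: m_even; rewrite -[m in odd m]last_i /= negbK.
by rewrite last_i modnn odd_i.
Qed.

Lemma parity_succ_mod (i : 'I_m) : parity (i.+1 %% m) != parity i.
Proof.
by rewrite -val_eqE /= !inordK ?ltnS ?leq_b1 // odd_succ_mod; case: (odd i).
Qed.

Lemma alternating_oi2rd : oi2rd (tricycle m h) alternating.
Proof.
apply/andP; split; apply/forallP => -[[[|[|c]] c2] i] //; rewrite ffunE /=.
- by rewrite set1_neq0.
- pose i1 := Ordinal (ltn_pmod i.+1 m_gt0).
  apply/implyP => _; rewrite eqEsubset subsetT -(setT_I2 (parity_succ_mod i)).
  apply/subsetP => l; rewrite !inE => /orP[] /eqP->; apply/bigcupP;
    [exists (ord0, i1) | exists (ord0, i)];
    rewrite /tricycle /tricycle_adj ?ffunE /= ?eqxx ?orbT ?inE //.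
- by apply/forallP => y; rewrite set1_neq0.
- by apply/forallP => -[[[|[|c']] c'2] j] //; rewrite ffunE //= ?set1_neq0 ?andbF ?implybT.
Qed.

Lemma alternating_weight : weight alternating = m.
Proof.
have -> : weight alternating = \sum_(c < 2) \sum_(j < m) #|alternating (c, j)|.
  by rewrite pair_bigA; apply: eq_bigr => -[].
rewrite big_ord_recl big_ord1 /=.
rewrite [X in _ + X]big1 => [|j _]; last by rewrite ffunE cards0.
rewrite addn0 -[RHS]card_ord -sum1_card; apply: eq_bigr => j _.
by rewrite ffunE cards1.
Qed.

Lemma tricycle_gamma_upper (T : finType) (e : rel T) :
  isomorphic e (tricycle m h) -> 2 * gamma_oir2 e <= #|T|.
Proof.
move=> iso_e; have le_w := isomorphic_gamma_oir2_le iso_e alternating_oi2rd.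
have [phi [/bij_eq_card -> _]] := iso_e.
by rewrite card_prod !card_ord -alternating_weight leq_mul2l le_w orbT.
Qed.

End AlternatingLabelling.

Lemma family_tricycle (T : finType) (e : rel T) : in_family e ->
  exists m h, [/\ 0 < m, ~~ odd m & isomorphic e (tricycle m h)].
Proof.
case=> [[r [k [r_gt0 k_gt0 even_k iso_e]]]|[k [k_ge2 even_k iso_e]]|[q [q_ge2 iso_e]]].
- exists (offset k r), (within_unit r k); split; [exact: offset_gt0 | by [] |].
  exact: isomorphic_trans iso_e (G1_tricycle r_gt0 k_gt0).
- have k_gt0 : 0 < k by lia.
  have unit_gt0 : forall j, j < 1 -> 0 < (fun=> k) j by [].
  exists (offset (fun=> k) 1), (within_unit 1 (fun=> k)).
  rewrite offsetS offset0; split => //.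
  apply: isomorphic_trans (isomorphic_trans iso_e (G2_G1 k_gt0)) _.
  by have := G1_tricycle (isT : 0 < 1) unit_gt0; rewrite offsetS offset0.
- exists (2 * q), (fun=> true); split; [lia | by rewrite oddM |].
  exact: isomorphic_trans iso_e (eqrel_isomorphic (@G3_tricycle q)).
Qed.

Lemma tricycle_G1 (T : finType) (e : rel T) m h :
  0 < m -> ~~ odd m -> isomorphic e (tricycle m h) -> ~~ h m.-1 -> in_family e.
Proof.
move=> m_gt0 even_m iso_e hm.
have [r [k [r_gt0 k_gt0 off_k hk]]] := tricycle_unit_decomposition m_gt0 hm; subst m.
apply: Or31; exists r, k; split => //.
apply: isomorphic_trans iso_e (isomorphic_trans (eqrel_isomorphic (eq_tricycle hk)) _).
exact: isomorphic_sym (G1_tricycle r_gt0 k_gt0).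
Qed.

Lemma tricycle_family (T : finType) (e : rel T) m h :
  0 < m -> ~~ odd m -> isomorphic e (tricycle m h) ->
  (forall i, i < m -> h i) \/ ~~ h m.-1 -> in_family e.
Proof.
move=> m_gt0 even_m iso_e [all_h|]; last exact: tricycle_G1 iso_e.
have [le_m2|gt_m2] := leqP m 2.
  (* Both cycle edges of a 2-cycle are the edge x_0 x_1: a 2-unit closed by w_1. *)
  have m2 : m = 2 by move: even_m; case: m m_gt0 le_m2 {iso_e all_h} => [|[|[|]]].
  subst m; apply: (@tricycle_G1 _ _ 2 (fun i => i == 0)) => //.
  apply: isomorphic_trans iso_e (eqrel_isomorphic _).
  have h0 := all_h 0 isT; have h1 := all_h 1 isT.
  by move=> [[[|[|?]] ?] [[|[|?]] ?]] [[[|[|?]] ?] [[|[|?]] ?]];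
    rewrite /tricycle /tricycle_adj //= ?h0 ?h1.
have [q mq] : exists q, m = 2 * q.
  by exists m./2; rewrite -{1}(odd_double_half m) (negbTE even_m) -mul2n.
subst m; apply: Or33; exists q; split; first by lia.
apply: isomorphic_trans iso_e (isomorphic_trans (eqrel_isomorphic (eq_tricycle all_h)) _).
exact: isomorphic_sym (eqrel_isomorphic (@G3_tricycle q)).
Qed.

Definition other (T : finType) (A : {set T}) (x : T) : T := odflt x [pick y in A | y != x].

Section Other.
Variables (T : finType) (A : {set T}).
Hypothesis A2 : #|A| = 2.

Lemma otherP x : x \in A ->
  [/\ other A x \in A, other A x != x & forall y, y \in A -> y = x \/ y = other A x].
Proof.
move: A2 => /eqP/cards2P [a [b [ab ->]]] xA; rewrite /other.
case: pickP => [y /andP[yA yx] | none] /=.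
  split=> // z; move: xA yA yx; rewrite !inE => /orP[]/eqP-> /orP[]/eqP-> //;
    rewrite ?eqxx // => _ /orP[]/eqP->; by [left|right].
exfalso; move: xA; rewrite !inE => /orP[]/eqP xE.
  by have := none b; rewrite !inE eqxx orbT xE eq_sym ab.
by have := none a; rewrite !inE eqxx xE ab.
Qed.

Lemma other_eq x y : x \in A -> y \in A -> y != x -> other A x = y.
Proof. by move=> xA yA yx; have [_ _ /(_ y yA) [xy|//]] := otherP xA; rewrite xy eqxx in yx. Qed.

Lemma other_inj x y : x \in A -> y \in A -> other A x = other A y -> x = y.
Proof.
move=> xA yA eq_o; apply/eqP/negPn/negP => xy.
have [_ oxx _] := otherP xA.
have oyx : other A y = x by apply: other_eq.
by move: oxx; rewrite eq_o oyx eqxx.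
Qed.

End Other.

Section ExtremalStructure.
Variables (T : finType) (e : rel T) (f : labelling T).
Hypotheses (e_sym : symmetric e) (e_irr : irreflexive e) (e_cf : claw_free e)
  (e_conn : connected e) (f_oi2rd : oi2rd e f)
  (label1 : forall v, ~~ blank f v -> #|f v| = 1)
  (blank_deg2 : forall s, blank f s -> #|[set u | e s u]| = 2)
  (blank_nbrs2 : forall u, ~~ blank f u -> #|blank_nbrs e f u| = 2).

(* A dart (v, s) is an edge from a labelled vertex v to a blank vertex s; the
   labelled vertices and the blank ones form a 2-regular bipartite graph, and
   [next_dart] walks along it: across s to its other neighbour v', then to the
   other blank neighbour of v'. *)
Definition dart (d : T * T) : bool := [&& ~~ blank f d.1, blank f d.2 & e d.1 d.2].

Definition next_dart (d : T * T) : T * T :=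
  if dart d then let v' := other [set u | e d.2 u] d.1 in (v', other (blank_nbrs e f v') d.2)
  else d.

Lemma next_dart_spec v s : dart (v, s) ->
  let v' := other [set u | e s u] v in let s' := other (blank_nbrs e f v') s in
  [/\ e s v', v' != v, ~~ blank f v', s \in blank_nbrs e f v' &
      [/\ s' \in blank_nbrs e f v', s' != s & dart (v', s')]].
Proof.
case/and3P => /= fv fs vs; set v' := other _ v; set s' := other _ s.
have v_nbr : v \in [set u | e s u] by rewrite inE e_sym.
have [v'_nbr v'v _] := otherP (blank_deg2 fs) v_nbr.
have sv' : e s v' by rewrite inE in v'_nbr.
have fv' : ~~ blank f v' by apply: contraL sv'; exact: blank_indep.
have s_nbr : s \in blank_nbrs e f v' by rewrite inE e_sym sv' fs.
have [s'_nbr s's _] := otherP (blank_nbrs2 fv') s_nbr.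
split => //; split => //; move: (s'_nbr); rewrite inE => /andP[v's' fs'].
by rewrite /dart fv' fs' v's'.
Qed.

Lemma next_dart_dart d : dart d -> dart (next_dart d).
Proof.
by case: d => v s dvs; rewrite /next_dart dvs; have [_ _ _ _ []] := next_dart_spec dvs.
Qed.

Lemma next_dart_inj : injective next_dart.
Proof.
have dartP d : dart (next_dart d) -> dart d.
  by rewrite /next_dart; case: ifP => // ->.
move=> [v1 s1] [v2 s2] eq_next.
have [d1|nd1] := boolP (dart (v1, s1)); last first.
  have nd2 : ~~ dart (v2, s2).
    by apply: contra nd1 => /next_dart_dart; rewrite -eq_next => /dartP.
  by move: eq_next; rewrite /next_dart (negbTE nd1) (negbTE nd2).
have d2 : dart (v2, s2) by apply: dartP; rewrite -eq_next; exact: next_dart_dart.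
move: eq_next; rewrite /next_dart d1 d2 /= => -[eq_v eq_s].
have [_ _ fv1 s1_nbr [s'1_nbr _ _]] := next_dart_spec d1.
have [_ _ _ s2_nbr _] := next_dart_spec d2.
rewrite -eq_v in s2_nbr eq_s.
have eq_s12 := other_inj (blank_nbrs2 fv1) s1_nbr s2_nbr eq_s; subst s2.
move: d1 d2 => /and3P[_ fs v1s] /and3P[_ _ v2s].
by rewrite (other_inj (blank_deg2 fs) _ _ eq_v) // inE e_sym.
Qed.

Section Walk.
Variable d0 : T * T.
Hypothesis d0_dart : dart d0.

Definition walk n := iter n next_dart d0.
Definition rimv n := (walk n).1.
Definition apex n := (walk n).2.
Definition period := order next_dart d0.

Lemma walkE n : walk n = (rimv n, apex n).
Proof. by rewrite /rimv /apex; case: (walk n). Qed.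

Lemma walkS n : walk n.+1 = next_dart (walk n).
Proof. by rewrite /walk iterS. Qed.

Lemma walk_dart n : dart (walk n).
Proof. by elim: n => [|n IHn] //; rewrite walkS; exact: next_dart_dart. Qed.

Lemma period_gt0 : 0 < period.
Proof. exact: order_gt0. Qed.

Lemma walk_period n : walk (n + period) = walk n.
Proof. by rewrite /walk iterD iter_order //; exact: next_dart_inj. Qed.

Lemma walk_periodM n q : walk (n + q * period) = walk n.
Proof. by elim: q => [|q IHq]; rewrite ?addn0 // mulSn addnCA addnC walk_period. Qed.

Lemma walk_mod n : walk n = walk (n %% period).
Proof. by rewrite {1}(divn_eq n period) addnC walk_periodM. Qed.

Lemma walk_eq_mod a b : walk a = walk b -> a %% period = b %% period.
Proof.
rewrite (walk_mod a) (walk_mod b) /walk => eq_ab.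
by rewrite -(findex_iter (ltn_pmod a period_gt0)) eq_ab findex_iter // ltn_pmod ?period_gt0.
Qed.

Lemma walk_prev a : exists n, walk n.+1 = walk a.
Proof.
exists (a + period).-1; rewrite prednK ?walk_period //.
by rewrite addn_gt0 period_gt0 orbT.
Qed.

Lemma rimv_mod n : rimv n = rimv (n %% period).
Proof. by rewrite /rimv walk_mod. Qed.

Lemma apex_mod n : apex n = apex (n %% period).
Proof. by rewrite /apex walk_mod. Qed.

Lemma walk_local n :
  [/\ ~~ blank f (rimv n), blank f (apex n), e (rimv n) (apex n), e (apex n) (rimv n.+1) &
      [/\ rimv n.+1 != rimv n, apex n.+1 != apex n,
          forall y, e (apex n) y -> y = rimv n \/ y = rimv n.+1 &
          forall t, blank f t -> e (rimv n.+1) t -> t = apex n \/ t = apex n.+1]].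
Proof.
have dn := walk_dart n; rewrite walkE in dn.
have [sv' v'v fv' s_nbr [_ s's _]] := next_dart_spec dn.
have rimvS : rimv n.+1 = other [set u | e (apex n) u] (rimv n).
  by rewrite /rimv walkS walkE /next_dart dn.
have apexS : apex n.+1 = other (blank_nbrs e f (rimv n.+1)) (apex n).
  by rewrite /apex walkS walkE /next_dart dn /= -/(rimv n.+1) rimvS.
move: dn => /and3P[/= fv fs vs]; rewrite -rimvS in sv' v'v fv' s_nbr s's.
split => //; split; [by [] | by rewrite apexS | move=> y ey | move=> t ft et].
  have v_nbr : rimv n \in [set u | e (apex n) u] by rewrite inE e_sym.
  by have [_ _ /(_ y)] := otherP (blank_deg2 fs) v_nbr; rewrite -rimvS inE; apply.
have [_ _ /(_ t)] := otherP (blank_nbrs2 fv') s_nbr.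
by rewrite -apexS inE et ft; apply.
Qed.

(* Otherwise rimv (n+1), apex n, apex (n+1) and y would form a claw. *)
Lemma rimv_nbr n y : ~~ blank f y -> e (rimv n.+1) y -> y = rimv n \/ y = rimv n.+2.
Proof.
move=> fy ey.
have [_ fs0 _ s0v1 [_ s1s0 nbr0 _]] := walk_local n.
have [_ fs1 v1s1 _ [_ _ nbr1 _]] := walk_local n.+1.
case ys0: (e y (apex n)).
  by rewrite e_sym in ys0; case: (nbr0 y ys0) => [|yv]; [left | rewrite yv e_irr in ey].
case ys1: (e y (apex n.+1)).
  by rewrite e_sym in ys1; case: (nbr1 y ys1) => [yv|]; [rewrite yv e_irr in ey | right].
exfalso; apply: e_cf; exists (rimv n.+1), (apex n), (apex n.+1), y; split => //.
- by rewrite e_sym.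
- rewrite eq_sym s1s0 /=.
  by apply/andP; split; apply: contraNneq fy => <-.
- by rewrite (blank_indep f_oi2rd fs0 fs1) e_sym ys0 e_sym ys1.
Qed.

Lemma next_dart_reverse n : next_dart (rimv n.+2, apex n.+1) = (rimv n.+1, apex n).
Proof.
have [_ fs0 _ s0v1 [_ s1s0 _ _]] := walk_local n.
have [fv1 fs1 v1s1 s1v2 [v2v1 _ _ _]] := walk_local n.+1.
have [fv2 _ _ _ _] := walk_local n.+2.
have d : dart (rimv n.+2, apex n.+1) by rewrite /dart /= fv2 fs1 e_sym.
rewrite /next_dart d /=.
have -> : other [set u | e (apex n.+1) u] (rimv n.+2) = rimv n.+1.
  apply: other_eq; rewrite ?blank_deg2 ?inE //; first by rewrite e_sym.
  by rewrite eq_sym.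
congr (_, _); apply: other_eq; rewrite ?blank_nbrs2 ?inE ?v1s1 ?fs1 ?fs0 //.
  by rewrite e_sym s0v1.
by rewrite eq_sym.
Qed.

Lemma walk_backward j n : walk j = (rimv n.+1, apex n) ->
  forall t, t <= n -> walk (j + t) = (rimv (n - t).+1, apex (n - t)).
Proof.
move=> wj; elim=> [|t IHt] lt_tn; first by rewrite addn0 subn0.
have n_t : n - t = (n - t.+1).+1 by lia.
by rewrite addnS walkS IHt 1?ltnW // n_t next_dart_reverse.
Qed.

(* Walking backwards from a reversed dart, the walk would meet its own
   reversal halfway, on a vertex that equals its successor. *)
Lemma walk_not_reversed j n : walk j <> (rimv n.+1, apex n).
Proof.
wlog le_jn : n / j <= n => [wlog_le|wj].
  have := wlog_le (n + j * period); rewrite /rimv /apex -addSn !walk_periodM; apply.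
  exact: leq_trans (leq_pmulr j period_gt0) (leq_addl _ _).
have [t nt] : exists t, n = j + t.*2 \/ n = (j + t.*2).+1.
  exists (n - j)./2; have := odd_double_half (n - j).
  by case: odd => /= half; [right | left]; lia.
have le_tn : t <= n by case: nt; lia.
have := walk_backward wj le_tn; rewrite walkE => -[eq_rimv eq_apex].
have [_ _ _ _ [rimv_ne apex_ne _ _]] := walk_local (j + t).
case: nt => nt.
- by move: rimv_ne; rewrite eq_rimv (_ : n - t = j + t) ?eqxx //; lia.
- by move: apex_ne; rewrite eq_apex (_ : n - t = (j + t).+1) ?eqxx //; lia.
Qed.

Lemma rimv_walk a b : rimv a = rimv b -> walk a = walk b.
Proof.
move=> eq_ab; rewrite !walkE eq_ab; congr (_, _).
have [n wn] := walk_prev a.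
have rimv_n : rimv n.+1 = rimv a by rewrite /rimv wn.
have apex_n : apex n.+1 = apex a by rewrite /apex wn.
have [_ _ _ _ [_ _ _ blank_nbr]] := walk_local n.
have [_ fb vb _ _] := walk_local b.
have nb : e (rimv n.+1) (apex b) by rewrite rimv_n eq_ab.
case: (blank_nbr _ fb nb) => [apex_b|->]; last by rewrite apex_n.
by have := @walk_not_reversed b n; rewrite walkE rimv_n eq_ab apex_b.
Qed.

Lemma apex_walk a b : apex a = apex b -> walk a = walk b.
Proof.
move=> eq_ab; have [_ _ _ _ [_ apex_ne rimv_nbr _]] := walk_local a.
have [_ _ vb _ _] := walk_local b.
rewrite e_sym -eq_ab in vb; case: (rimv_nbr _ vb) => [/esym/rimv_walk //|].
move/esym/rimv_walk => wab; move: apex_ne; rewrite {1}/apex wab -/(apex b) -eq_ab.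
by rewrite eqxx.
Qed.

Lemma rimv_apex a b : rimv a <> apex b.
Proof.
have [fa _ _ _ _] := walk_local a; have [_ fb _ _ _] := walk_local b.
by move=> eq_ab; rewrite eq_ab fb in fa.
Qed.

Definition walk_vertex (p : 'I_2 * 'I_period) : T :=
  if p.1 == ord0 then rimv p.2 else apex p.2.

Definition rim_edge n : bool := e (rimv n) (rimv n.+1).

Lemma ord_walk (i j : 'I_period) : walk i = walk j -> i = j.
Proof. by move/walk_eq_mod; rewrite !modn_small // => /val_inj. Qed.

Lemma walk_vertex_inj : injective walk_vertex.
Proof.
move=> [[[|[|?]] ?] i] [[[|[|?]] ?] j] //; rewrite /walk_vertex /= => eq_ij.
- by rewrite (ord_walk (rimv_walk eq_ij)); congr (_, _); exact: val_inj.
- by case: (rimv_apex eq_ij).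
- by case: (rimv_apex (esym eq_ij)).
- by rewrite (ord_walk (apex_walk eq_ij)); congr (_, _); exact: val_inj.
Qed.

Definition on_walk (x : T) : bool :=
  [exists i : 'I_period, (rimv i == x) || (apex i == x)].

Lemma rimv_on_walk n : on_walk (rimv n).
Proof.
by apply/existsP; exists (Ordinal (ltn_pmod n period_gt0)); rewrite /= -rimv_mod eqxx.
Qed.

Lemma apex_on_walk n : on_walk (apex n).
Proof.
by apply/existsP; exists (Ordinal (ltn_pmod n period_gt0)); rewrite /= -apex_mod eqxx orbT.
Qed.

Lemma on_walk_nbr x y : e x y -> on_walk x -> on_walk y.
Proof.
move=> xy /existsP[i /orP[] /eqP xi]; subst x; last first.
  by have [_ _ _ _ [_ _ /(_ y xy) [] -> _]] := walk_local i;
    rewrite rimv_on_walk.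
have [n wn] := walk_prev i.
have rimv_n : rimv n.+1 = rimv i by rewrite /rimv wn.
rewrite -rimv_n in xy; have [fy|fy] := boolP (blank f y).
  by have [_ _ _ _ [_ _ _ /(_ y fy xy) [] ->]] := walk_local n; rewrite apex_on_walk.
by case: (rimv_nbr fy xy) => ->; rewrite rimv_on_walk.
Qed.

Lemma walk_vertex_surj y : exists p, walk_vertex p = y.
Proof.
have closed_walk : closed e on_walk.
  by move=> a b ab; apply/idP/idP; apply: on_walk_nbr; rewrite // e_sym.
have : rimv 0 \in on_walk by exact: rimv_on_walk.
rewrite (closed_connect closed_walk (e_conn (rimv 0) y)) unfold_in.
by case/existsP => i /orP[] /eqP <-; [exists (ord0, i) | exists (ord_max, i)].
Qed.

Lemma rimv_eq_mod a b : rimv a = rimv b -> a %% period = b %% period.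
Proof. by move/rimv_walk/walk_eq_mod. Qed.

Lemma apex_rimv_adj (i j : 'I_period) :
  e (apex i) (rimv j) = (j == i :> nat) || (j == i.+1 %% period :> nat).
Proof.
have [_ _ vs sv [_ _ nbr _]] := walk_local i.
apply/idP/orP => [/nbr [] /rimv_eq_mod|[/eqP/val_inj -> | /eqP ->]].
- by rewrite (modn_small (ltn_ord j)) (modn_small (ltn_ord i)) => ->; left.
- by rewrite (modn_small (ltn_ord j)) => ->; right.
- by rewrite e_sym.
- by rewrite -rimv_mod.
Qed.

Lemma rimv_rimv_adj (i j : 'I_period) :
  e (rimv i) (rimv j) =
  (j == i.+1 %% period :> nat) && rim_edge i || (i == j.+1 %% period :> nat) && rim_edge j.
Proof.
apply/idP/orP => [ij|[] /andP[/eqP -> edge]]; last 2 first.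
- by rewrite -rimv_mod.
- by rewrite e_sym -rimv_mod.
have [n wn] := walk_prev i.
have rimv_n : rimv n.+1 = rimv i by rewrite /rimv wn.
have [fj _ _ _ _] := walk_local j.
move: (ij); rewrite -rimv_n => /(rimv_nbr fj) [jn|jn2].
- have wj1 : walk j.+1 = walk n.+1 by rewrite !walkS (rimv_walk jn).
  have ij1 : rimv j.+1 = rimv i by rewrite -rimv_n /rimv wj1.
  right; rewrite /rim_edge ij1 e_sym ij andbT.
  by have := rimv_eq_mod ij1; rewrite (modn_small (ltn_ord i)) => ->.
- have wn2 : walk n.+2 = walk i.+1 by rewrite !walkS -walkS wn.
  have ij1 : rimv j = rimv i.+1 by rewrite jn2 /rimv wn2.
  left; rewrite /rim_edge -ij1 ij andbT.
  by have := rimv_eq_mod ij1; rewrite (modn_small (ltn_ord j)) => ->.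
Qed.

Lemma walk_vertex_rel p q :
  e (walk_vertex p) (walk_vertex q) = tricycle period rim_edge p q.
Proof.
case: p q => [[[|[|?]] ?] i] [[[|[|?]] ?] j] //;
  rewrite /walk_vertex /tricycle /tricycle_adj /= ?orbF ?andbF ?orbF.
- exact: rimv_rimv_adj.
- by rewrite e_sym apex_rimv_adj.
- exact: apex_rimv_adj.
- have [_ fi _ _ _] := walk_local i; have [_ fj _ _ _] := walk_local j.
  exact: negbTE (blank_indep f_oi2rd fi fj).
Qed.

Lemma walk_tricycle : isomorphic e (tricycle period rim_edge).
Proof.
apply: isomorphic_sym; exists walk_vertex; split; last by move=> p q; rewrite walk_vertex_rel.
exact: inj_surj_bij walk_vertex_inj walk_vertex_surj.
Qed.

Lemma label_alternates n : f (rimv n.+1) != f (rimv n).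
Proof.
have [fv fs _ _ [_ _ nbr _]] := walk_local n.
apply/eqP => eq_label; have /cards1P [l fl] : #|f (rimv n)| == 1 by rewrite label1.
have [l' l'l] : exists l' : 'I_2, l' != l.
  by exists (if l == ord0 then ord_max else ord0); case: l {fl} => [[|[|?]] ?].
have : l' \in \bigcup_(u | e (apex n) u) f u by rewrite (blank_cover f_oi2rd fs) inE.
case/bigcupP => u /nbr [] ->; rewrite ?eq_label fl inE => /eqP eq_l';
  by rewrite eq_l' eqxx in l'l.
Qed.

Lemma set1_I2_eq (A B C : {set 'I_2}) :
  #|A| = 1 -> #|B| = 1 -> #|C| = 1 -> A != B -> C != B -> A = C.
Proof.
move=> /eqP/cards1P [a ->] /eqP/cards1P [b ->] /eqP/cards1P [c ->].
rewrite !(inj_eq set1_inj) => ab cb; congr [set _].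
by case: a b c ab cb => [[|[|?]] ?] [[|[|?]] ?] [[|[|?]] ?]; rewrite -!val_eqE //= => *;
  apply: val_inj.
Qed.

Lemma label_rimv_double q : f (rimv q.*2) = f (rimv 0).
Proof.
elim: q => [//|q <-]; rewrite doubleS.
have [fq _ _ _ _] := walk_local q.*2; have [fq1 _ _ _ _] := walk_local q.*2.+1.
have [fq2 _ _ _ _] := walk_local q.*2.+2.
apply: (set1_I2_eq (B := f (rimv q.*2.+1))); rewrite ?label1 ?label_alternates //.
by rewrite eq_sym label_alternates.
Qed.

Lemma period_even : ~~ odd period.
Proof.
apply/negP => odd_p; have := label_alternates period./2.*2.
have -> : period./2.*2.+1 = 0 + period by rewrite -[in RHS](odd_double_half period) odd_p.
by rewrite {1}/rimv walk_period label_rimv_double eqxx.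
Qed.

End Walk.

(* If some rim edge is missing, start the walk right after it so that it
   becomes the last rim edge; this puts the graph in G1, otherwise in G3. *)
Lemma extremal_tricycle : (exists s, blank f s) ->
  exists m h, [/\ 0 < m, ~~ odd m, isomorphic e (tricycle m h) &
                  (forall i, i < m -> h i) \/ ~~ h m.-1].
Proof.
case=> s fs.
have [/existsP [d /andP[dd no_edge]] | /existsPn all_edges] :=
  boolP [exists d, dart d && ~~ e d.1 (next_dart d).1].
  have d0_dart := next_dart_dart dd.
  exists (period (next_dart d)), (rim_edge (next_dart d)); split;
    [exact: period_gt0 | exact: period_even | exact: walk_tricycle | right].
  have p_pred : (period (next_dart d)).-1.+1 = period (next_dart d) by rewrite prednK ?period_gt0.
  have w_last : walk (next_dart d) (period (next_dart d)) = next_dart d.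
    by rewrite -[period _]add0n walk_period.
  have w_pred : walk (next_dart d) (period (next_dart d)).-1 = d.
    by apply: next_dart_inj; rewrite -walkS p_pred w_last.
  by rewrite /rim_edge p_pred /rimv w_last w_pred.
have [u su] : exists u, e s u.
  have : 0 < #|[set u | e s u]| by rewrite blank_deg2.
  by rewrite card_gt0 => /set0Pn [u]; rewrite inE; exists u.
have fu : ~~ blank f u by apply: contraL su; exact: blank_indep.
have d0_dart : dart (u, s) by rewrite /dart /= fu fs e_sym.
exists (period (u, s)), (rim_edge (u, s)); split;
  [exact: period_gt0 | exact: period_even | exact: walk_tricycle | left].
move=> i _; have := all_edges (walk (u, s) i).
by rewrite walk_dart //= negbK /rim_edge /rimv walkS.
Qed.

End ExtremalStructure.

Theorem theorem1 (T : finType) (e : rel T)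
  (e_sym : symmetric e) (e_irr : irreflexive e)
  (T_nonempty : 0 < #|T|) (e_conn : connected e) (e_cf : claw_free e) :
  #|T| <= 2 * gamma_oir2 e /\ (2 * gamma_oir2 e = #|T| <-> in_family e).
Proof.
have lower : #|T| <= 2 * gamma_oir2 e.
  by have [f ef <-] := gamma_oir2_attained e; exact: weight_lower_bound.
split=> //; split=> [tight|family_e]; last first.
  apply/eqP; rewrite eqn_leq lower andbT.
  have [m [h [m_gt0 even_m iso_e]]] := family_tricycle family_e.
  exact: (tricycle_gamma_upper m_gt0 even_m iso_e).
have [f ef weight_f] := gamma_oir2_attained e; rewrite -weight_f in tight.
have [label1 blank_deg2 blank_nbrs2] := extremal_labelling e_sym e_cf ef tight.
have blank_ex : exists s, blank f s.
  apply/existsP; apply: contraLR T_nonempty => /existsPn all_labelled.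
  have : weight f = #|T|.
    by rewrite -sum1_card /weight; apply: eq_bigr => v _; rewrite label1.
  by move: tight => /[swap] ->; lia.
have [m [h [m_gt0 even_m iso_e hm]]] :=
  extremal_tricycle e_sym e_irr e_cf e_conn ef label1 blank_deg2 blank_nbrs2 blank_ex.
exact: tricycle_family m_gt0 even_m iso_e hm.
Qed.
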